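(* For the biased batched SVRG (Algorithm 3), $$b_j\,\mathbb{E}\langle e_j,\tilde x_j-\tilde x_{j-1}\rangle=-\eta_j(1-\lambda)B_j\,\mathbb{E}\langle e_j,\nabla f(\tilde x_j)\rangle-\eta_jB_j\,\mathbb{E}\|e_j\|^2.$$
   Context: Setting: $f(x)=\frac1n\sum_{i=1}^n f_i(x)$ with each $f_i:\mathbb{R}^d\to\mathbb{R}$ differentiable and $L$-smooth. For $\mathcal I\subset\{1,\dots,n\}$, $\nabla f_{\mathcal I}(x)=\frac1{|\mathcal I|}\sum_{i\in\mathcal I}\nabla f_i(x)$. $N\sim\mathrm{Geom}(\gamma')$ means $P(N=k)=(1-\gamma')\gamma'^k$, $k\ge0$. Epoch $j$ of the batched SVRG scheme: $\mathcal I_j$ uniformly random of size $B_j$, $g_j=\nabla f_{\mathcal I_j}(\tilde x_{j-1})$, $x^{(j)}_0=\tilde x_{j-1}$; $N_j\sim\mathrm{Geom}(B_j/(B_j+b_j))$ drawn independently (mean $B_j/b_j$); for $k=0,\dots,N_j-1$, $\tilde{\mathcal I}_k$ uniformly random of size $b_j$ and $x^{(j)}_{k+1}=x^{(j)}_k-\eta_jv^{(j)}_k$; $\tilde x_j=x^{(j)}_{N_j}$. Algorithm 3 (biased, $0<\lambda<1$): $v^{(j)}_k=(1-\lambda)(\nabla f_{\tilde{\mathcal I}_k}(x^{(j)}_k)-\nabla f_{\tilde{\mathcal I}_k}(x^{(j)}_0))+\lambda g_j$, and $e_j=\lambda\nabla f_{\mathcal I_j}(\tilde x_{j-1})-(1-\lambda)\nabla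 f(\tilde x_{j-1})$. $\mathbb{E}$ is expectation over all randomness. *)

From HB Require Import structures.
From mathcomp Require Import all_boot all_order all_algebra.
From mathcomp Require Import all_classical all_reals all_analysis.
Set Implicit Arguments. Unset Strict Implicit. Unset Printing Implicit Defensive.
Import Order.TTheory GRing.Theory Num.Theory.
Import numFieldNormedType.Exports.
Local Open Scope ring_scope.

Section SVRG.
Variables (R : realType) (n d : nat).
Local Notation vec := 'rV[R]_d.

Definition dot (u v : vec) : R := \sum_(k < d) u 0 k * v 0 k.
Definition enorm (v : vec) : R := Num.sqrt (dot v v).

Definition grad (f : vec -> R) (x : vec) : vec :=
  \row_(k < d) derive f x (delta_mx 0 k).

Definition Lsmooth (L : R) (f : vec -> R) : Prop :=
  (forall x, differentiable f x) /\
  (forall x y, enorm (grad f x - grad f y) <= L * enorm (x - y)).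

Definition gradS (F : 'I_n -> vec -> R) (S : {set 'I_n}) (x : vec) : vec :=
  (#|S|%:R)^-1 *: \sum_(i in S) grad (F i) x.

Definition gradfull (F : 'I_n -> vec -> R) (x : vec) : vec :=
  (n%:R)^-1 *: \sum_(i < n) grad (F i) x.

Definition batches (k : nat) : {set {set 'I_n}} := [set S : {set 'I_n} | #|S| == k].

Definition svrg_step (F : 'I_n -> vec -> R) (lam eta : R) (x0 g : vec)
  (x : vec) (S : {set 'I_n}) : vec :=
  x - eta *: ((1 - lam) *: (gradS F S x - gradS F S x0) + lam *: g).

(* final iterate x~_j = x_{N_j} of the epoch started at x0 = x~_{j-1}, with
   outer batch I and inner batches s = [:: I~_0; ...; I~_{N_j - 1}] *)
Definition traj (F : 'I_n -> vec -> R) (lam eta : R) (x0 : vec)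
  (I : {set 'I_n}) (s : seq {set 'I_n}) : vec :=
  foldl (svrg_step F lam eta x0 (gradS F I x0)) x0 s.

Definition err (F : 'I_n -> vec -> R) (lam : R) (x0 : vec) (I : {set 'I_n}) : vec :=
  lam *: gradS F I x0 - (1 - lam) *: gradfull F x0.

(* parameter of the geometric law: N ~ Geom(B/(B+b)) *)
Definition gam (B b : nat) : R := B%:R / (B + b)%:R.

(* N-th term of the expectation over (N, I~_0, ..., I~_{N-1}):
   P(N) * sum over N independent uniform inner batches of size b *)
Definition geom_term (B b : nat) (G : seq {set 'I_n} -> R) (N : nat) : R :=
  (1 - gam B b) * gam B b ^+ N *
  \sum_(t : N.-tuple {set 'I_n} | [forall i, tnth t i \in batches b])
     (#|batches b|%:R)^-N * G t.

Definition geomE (B b : nat) (G : seq {set 'I_n} -> R) : R :=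
  limn (series (geom_term B b G)).

Definition geom_integrable (B b : nat) (G : seq {set 'I_n} -> R) : Prop :=
  cvgn (series (geom_term B b (fun s => `|G s|))).

(* expectation over all randomness of epoch j (I_j, N_j, inner batches),
   for a random quantity H I s *)
Definition epochE (B b : nat) (H : {set 'I_n} -> seq {set 'I_n} -> R) : R :=
  \sum_(I in batches B) (#|batches B|%:R)^-1 * geomE B b (H I).

Definition epoch_integrable (B b : nat) (H : {set 'I_n} -> seq {set 'I_n} -> R) : Prop :=
  forall I, I \in batches B -> geom_integrable B b (H I).

(* the three random quantities of the statement, as functions of
   x0 = x~_{j-1}, I = I_j and s = inner batches *)
Definition Q1 F lam eta (x0 : vec) I s : R :=
  dot (err F lam x0 I) (traj F lam eta x0 I s - x0).
Definition Q2 F lam eta (x0 : vec) I s : R :=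
  dot (err F lam x0 I) (gradfull F (traj F lam eta x0 I s)).
Definition Q3 F lam (x0 : vec) I (s : seq {set 'I_n}) : R :=
  dot (err F lam x0 I) (err F lam x0 I).

End SVRG.

(* Full expectation: the history (epochs 1..j-1) lives on a probability space
   (Omega, P), X = x~_{j-1}; epoch j's randomness is fresh and independent, so
   E[H] = int_Omega E_epoch(X w)[H] dP(w). *)
Definition fullE (R : realType) (dsp : measure_display) (Omega : measurableType dsp)
  (P : probability Omega R) (n d : nat) (B b : nat)
  (H : 'rV[R]_d -> {set 'I_n} -> seq {set 'I_n} -> R) (X : Omega -> 'rV[R]_d) : R :=
  Rintegral P setT (fun w => epochE B b (H (X w))).

(* Fix the start x0 = x~_{j-1} and the outer batch I_j, so that e = e_j is fixed.
   1. Uniform mini-batches are unbiased: the average of grad f_S over all batches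
      of size b is grad f.  Hence one inner step moves the conditional mean of
      <e, x_k - x0> by -eta (1-lam) <e, grad f(x_k)> - eta |e|^2.
   2. Averages over N i.i.d. uniform batches satisfy a Markov property, so the
      averaged quantity u_N = E<e, x_N - x0> obeys
      u_{N+1} = u_N - eta (1-lam) v_N - eta |e|^2  with u_0 = 0.
   3. Weighting by the geometric law P(N) = (1-g) g^N, g = B/(B+b), turns this
      recursion into the fixed-point equation  U = g (U + W)  for the series,
      i.e. b U = B W, which is the claim for fixed x0 and I_j.
   4. Averaging over I_j and integrating over the history x0 = X(w) is linear. *)

From mathcomp Require Import all_boot all_order all_algebra.
From mathcomp Require Import all_classical all_reals all_analysis.
From mathcomp Require Import perm.
From mathcomp.algebra_tactics Require Import ring.
Set Implicit Arguments. Unset Strict Implicit. Unset Printing Implicit Defensive.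
Import Order.TTheory GRing.Theory Num.Theory.
Import numFieldNormedType.Exports.
Local Open Scope ring_scope.

Lemma sum_tuple_cons (V : nmodType) (T : finType) (P : pred T) (N : nat)
    (h : seq T -> V) :
  \sum_(t : N.+1.-tuple T | [forall i, P (tnth t i)]) h t =
  \sum_(x | P x) \sum_(t : N.-tuple T | [forall i, P (tnth t i)]) h (x :: t).
Proof.
rewrite pair_big_dep /=.
rewrite (reindex (fun p : T * N.-tuple T => [tuple of p.1 :: p.2])) /=; last first.
  exists (fun t : N.+1.-tuple T => (thead t, [tuple of behead t])).
    by move=> [x t] _ /=; congr pair; apply: val_inj.
  by move=> t _ /=; rewrite [RHS]tuple_eta.
apply: eq_bigl => -[x t] /=.
apply/forallP/andP => [Hxt|[Px /forallP Ht] i].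
  split; first exact: Hxt ord0.
  by apply/forallP => i; have := Hxt (lift ord0 i); rewrite tnthS.
by case: (unliftP ord0 i) => [j ->|->]; rewrite ?tnthS ?tnth0.
Qed.

Section UniformTuples.
Variables (R : numFieldType) (T : finType) (A : {set T}).

Definition tuple_avg (N : nat) (h : seq T -> R) : R :=
  \sum_(t : N.-tuple T | [forall i, tnth t i \in A]) (#|A|%:R)^-N * h t.

Lemma tuple_avg0 (h : seq T -> R) : tuple_avg 0 h = h [::].
Proof.
rewrite /tuple_avg (big_pred1 [tuple]) ?expr0 ?invr1 ?mul1r // => t.
by rewrite [t]tuple0 /= [RHS]eqxx; apply/forallP => -[].
Qed.

Lemma tuple_avgS (N : nat) (h : seq T -> R) :
  tuple_avg N.+1 h =
  (#|A|%:R)^-1 * \sum_(S in A) tuple_avg N (fun s => h (S :: s)).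
Proof.
rewrite /tuple_avg (@sum_tuple_cons _ _ (fun S => S \in A) N
  (fun s => (#|A|%:R)^-N.+1 * h s)) mulr_sumr.
apply: eq_bigr => S _; rewrite mulr_sumr; apply: eq_bigr => t _.
by rewrite exprS invfM mulrA.
Qed.

Lemma tuple_avg_eq (N : nat) (h1 h2 : seq T -> R) :
  (forall s, h1 s = h2 s) -> tuple_avg N h1 = tuple_avg N h2.
Proof. by move=> h12; apply: eq_bigr => t _; rewrite h12. Qed.

Hypothesis A_neq0 : #|A| != 0%N.

Lemma tuple_avg_const (N : nat) (c : R) : tuple_avg N (fun _ => c) = c.
Proof.
elim: N => [|N IH]; first by rewrite tuple_avg0.
rewrite tuple_avgS (eq_bigr (fun _ => c)) // sumr_const.
by rewrite -[c *+ _]mulr_natl mulKf // pnatr_eq0.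
Qed.

Lemma tuple_avg_affine (N : nat) (h1 h2 : seq T -> R) (p q : R) :
  tuple_avg N (fun s => h1 s + p * h2 s + q) =
  tuple_avg N h1 + p * tuple_avg N h2 + q.
Proof.
rewrite -[in RHS](tuple_avg_const N q) /tuple_avg mulr_sumr -!big_split /=.
by apply: eq_bigr => t _; ring.
Qed.

(* Markov property: averaging a function of the trajectory after N+1 steps is
   averaging, over the first N steps, the one-step conditional expectation. *)
Lemma tuple_avg_foldl (U : Type) (step : U -> T -> U) (Phi : U -> R) (N : nat) (y : U) :
  tuple_avg N.+1 (fun s => Phi (foldl step y s)) =
  tuple_avg N (fun s => (#|A|%:R)^-1 * \sum_(S in A) Phi (step (foldl step y s) S)).
Proof.
elim: N y => [|N IH] y.
  by rewrite tuple_avgS tuple_avg0; congr (_ * _); apply: eq_bigr => S _; rewrite tuple_avg0.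
rewrite tuple_avgS [RHS]tuple_avgS; congr (_ * _); apply: eq_bigr => S _ /=.
exact: IH.
Qed.

End UniformTuples.

Section UniformBatches.
Variables (R : numFieldType) (n b : nat).
Local Notation A := (batches n b).

(* By symmetry under transpositions, every index lies in equally many batches. *)
Lemma batch_count_sym (i j : 'I_n) :
  \sum_(S in A | i \in S) (1 : R) = \sum_(S in A | j \in S) (1 : R).
Proof.
rewrite (reindex (fun S : {set 'I_n} => tperm i j @: S)) /=; last first.
  exists (fun S : {set 'I_n} => tperm i j @: S) => S _;
  by rewrite -imset_comp (eq_imset _ (tpermK i j)) imset_id.
apply: eq_bigl => S; rewrite !inE card_imset; last exact: perm_inj.
by rewrite -{1}(tpermR i j) mem_imset //; exact: perm_inj.
Qed.

Lemma sum_batches_sum (V : lmodType R) (G : 'I_n -> V) :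
  \sum_(S in A) \sum_(i in S) G i = \sum_i (\sum_(S in A | i \in S) (1 : R)) *: G i.
Proof.
under eq_bigr do rewrite big_mkcond /=.
rewrite exchange_big /=; apply: eq_bigr => i _.
by rewrite scaler_suml -big_mkcondr /=; apply: eq_bigr => S _; rewrite scale1r.
Qed.

Hypothesis b_range : (0 < b <= n)%N.

Lemma card_batches_neq0 : #|A| != 0%N.
Proof. by rewrite card_draws card_ord -lt0n bin_gt0; case/andP: b_range. Qed.

Lemma batch_mean_unbiased (V : lmodType R) (G : 'I_n -> V) :
  (#|A|%:R)^-1 *: \sum_(S in A) ((#|S|%:R)^-1 *: \sum_(i in S) G i)
  = (n%:R)^-1 *: \sum_i G i.
Proof.
have [b0 bn] := andP b_range; have n0 : (0 < n)%N := leq_trans b0 bn.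
pose c := \sum_(S in A | Ordinal n0 \in S) (1 : R).
have sum_c (W : lmodType R) (H : 'I_n -> W) :
    \sum_(S in A) \sum_(i in S) H i = c *: \sum_i H i.
  rewrite sum_batches_sum scaler_sumr; apply: eq_bigr => i _.
  by rewrite (batch_count_sym i (Ordinal n0)).
have count_c : n%:R * c = #|A|%:R * b%:R.
  have := sum_c _ (fun _ => (1 : R)).
  rewrite sumr_const card_ord -[c *: _]/(c * n%:R) mulrC => <-.
  rewrite (eq_bigr (fun _ => b%:R)) => [|S]; last first.
    by rewrite inE => /eqP <-; rewrite sumr_const.
  by rewrite sumr_const mulr_natl.
transitivity ((#|A|%:R)^-1 *: \sum_(S in A) ((b%:R)^-1 *: \sum_(i in S) G i)).
  by congr (_ *: _); apply: eq_bigr => S; rewrite inE => /eqP ->.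
rewrite -scaler_sumr sum_c !scalerA; congr (_ *: _).
have An0 : (#|A|%:R : R) != 0 by rewrite pnatr_eq0 card_batches_neq0.
have bn0 : (b%:R : R) != 0 by rewrite pnatr_eq0 -lt0n.
have nn0 : (n%:R : R) != 0 by rewrite pnatr_eq0 -lt0n.
by apply: (mulfI nn0); rewrite mulrCA count_c mulfV // mulrACA !mulVf ?mulr1.
Qed.

End UniformBatches.

Section InnerProduct.
Variables (R : realType) (d : nat).
Implicit Types (u v w : 'rV[R]_d) (a : R).

Lemma dotD u v w : dot u (v + w) = dot u v + dot u w.
Proof. by rewrite /dot -big_split; apply: eq_bigr => k _; rewrite mxE mulrDr. Qed.

Lemma dotB u v w : dot u (v - w) = dot u v - dot u w.
Proof. by rewrite /dot -sumrB; apply: eq_bigr => k _; rewrite !mxE mulrBr. Qed.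

Lemma dotZ u a v : dot u (a *: v) = a * dot u v.
Proof. by rewrite /dot mulr_sumr; apply: eq_bigr => k _; rewrite mxE mulrCA. Qed.

Lemma dot0 u : dot u 0 = 0.
Proof. by rewrite /dot big1 // => k _; rewrite mxE mulr0. Qed.

Lemma dot_sum u (I : finType) (P : pred I) (G : I -> 'rV[R]_d) :
  dot u (\sum_(i | P i) G i) = \sum_(i | P i) dot u (G i).
Proof. exact: (big_morph (dot u) (dotD u) (dot0 u)). Qed.

End InnerProduct.

Section OneStep.
Variables (R : realType) (n d b : nat) (F : 'I_n -> 'rV[R]_d -> R).
Variables (lam eta : R) (x0 g : 'rV[R]_d).
Hypothesis b_range : (0 < b <= n)%N.
Local Notation A := (batches n b).
Local Notation step := (svrg_step F lam eta x0 g).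

Lemma svrg_step_mean (y : 'rV[R]_d) :
  (#|A|%:R)^-1 *: \sum_(S in A) (step y S - x0) =
  y - x0 - (eta * (1 - lam)) *: gradfull F y
    - eta *: (lam *: g - (1 - lam) *: gradfull F x0).
Proof.
have unbiased z : (#|A|%:R)^-1 *: \sum_(S in A) gradS F S z = gradfull F z.
  exact: (batch_mean_unbiased b_range (fun i => grad (F i) z)).
have A0 : (#|A|%:R : R) != 0 by rewrite pnatr_eq0 card_batches_neq0.
rewrite (eq_bigr (fun S => (y - x0 - (eta * lam) *: g)
           + (eta * (1 - lam)) *: (gradS F S x0 - gradS F S y))) => [|S _]; last first.
  by apply/rowP => k; rewrite /svrg_step !mxE; ring.
rewrite big_split /= sumr_const -scaler_sumr sumrB scalerDr.
rewrite -[(_ - _) *+ #|A|]scaler_nat scalerA mulVf // scale1r.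
rewrite (scalerA _^-1) (mulrC _^-1) scalerBr -!(scalerA (eta * (1 - lam))) !unbiased.
by apply/rowP => k; rewrite !mxE; ring.
Qed.

Lemma svrg_step_drift (u y : 'rV[R]_d) :
  (#|A|%:R)^-1 * \sum_(S in A) dot u (step y S - x0) =
  dot u (y - x0) - eta * (1 - lam) * dot u (gradfull F y)
    - eta * dot u (lam *: g - (1 - lam) *: gradfull F x0).
Proof.
have := congr1 (dot u) (svrg_step_mean y).
by rewrite dotZ dot_sum => ->; rewrite [LHS]dotB [in LHS]dotB !dotZ.
Qed.

End OneStep.

Lemma series_fixed_point (R : realType) (g : R) (u w : R^nat) :
  u 0%N = 0 -> (forall N, u N.+1 = g * (u N + w N)) ->
  cvgn (series u) -> cvgn (series w) ->
  limn (series u) = g * (limn (series u) + limn (series w)).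
Proof.
move=> u0 u_rec cu cw.
have series_rec M : series u M.+1 = g * (series u M + series w M).
  rewrite /series /= big_nat_recl // u0 add0r.
  by rewrite (eq_bigr _ (fun k _ => u_rec k)) -mulr_sumr big_split.
have : ([sequence series u M.+1]_M @ \oo --> g * (limn (series u) + limn (series w)))%classic.
  rewrite (_ : [sequence _]_M = (fun M => g * (series u M + series w M))).
    exact: cvgMl_tmp (cvgD cu cw).
  by apply: funext => M /=; rewrite series_rec.
by rewrite cvg_shiftS => /(cvg_lim (@Rhausdorff R)).
Qed.

Lemma geometric_balance (R : fieldType) (B b U W : R) :
  B + b != 0 -> U = B / (B + b) * (U + W) -> b * U = B * W.
Proof.
move=> sum_nz fixed; apply: (addrI (B * U)); rewrite -mulrDl -mulrDr.
by rewrite {1}fixed; field.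
Qed.

Section GeometricEpoch.
Variables (R : realType) (n : nat) (B b : nat).
Hypothesis B_pos : (0 < B)%N.

Lemma geom_term_avg (G : seq {set 'I_n} -> R) (N : nat) :
  geom_term B b G N = (1 - gam R B b) * gam R B b ^+ N * tuple_avg (batches n b) N G.
Proof. by []. Qed.

Lemma gam_ge0 : 0 <= gam R B b.
Proof. by rewrite /gam divr_ge0 ?ler0n. Qed.

Lemma gam_le1 : gam R B b <= 1.
Proof. by rewrite /gam ler_pdivrMr ?mul1r ?ler_nat ?leq_addr // ltr0n addn_gt0 B_pos. Qed.

Lemma gam_lt1 : (0 < b)%N -> gam R B b < 1.
Proof.
move=> b_pos; rewrite /gam ltr_pdivrMr ?ltr0n ?addn_gt0 ?B_pos //.
by rewrite mul1r ltr_nat -[X in (X < _)%N]addn0 ltn_add2l.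
Qed.

Lemma geom_series_cvg (G : seq {set 'I_n} -> R) :
  geom_integrable B b G -> cvgn (series (geom_term B b G)).
Proof.
move=> G_int; apply: normed_cvg; apply: (series_le_cvg _ _ _ G_int) => N /=.
- exact: normr_ge0.
- rewrite geom_term_avg mulr_ge0 ?mulr_ge0 ?exprn_ge0 ?subr_ge0 ?gam_ge0 ?gam_le1 //.
  by apply: sumr_ge0 => t _; rewrite mulr_ge0 ?invr_ge0 ?exprn_ge0 ?ler0n.
rewrite !geom_term_avg normrM ger0_norm; last first.
  by rewrite mulr_ge0 ?exprn_ge0 ?subr_ge0 ?gam_ge0 ?gam_le1.
rewrite ler_wpM2l ?mulr_ge0 ?exprn_ge0 ?subr_ge0 ?gam_ge0 ?gam_le1 //.
apply: le_trans (ler_norm_sum _ _ _) _.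
by apply: ler_sum => t _; rewrite normrM ger0_norm // invr_ge0 exprn_ge0 ?ler0n.
Qed.

End GeometricEpoch.

Section EpochIdentity.
Variables (R : realType) (n d : nat) (F : 'I_n -> 'rV[R]_d -> R).
Variables (lam eta : R) (B b : nat) (x0 : 'rV[R]_d).
Hypotheses (B_pos : (0 < B)%N) (b_range : (0 < b <= n)%N).
Local Notation A := (batches n b).

Lemma Q1_step (I : {set 'I_n}) (N : nat) :
  tuple_avg A N.+1 (Q1 F lam eta x0 I) =
  tuple_avg A N (Q1 F lam eta x0 I)
  - eta * (1 - lam) * tuple_avg A N (Q2 F lam eta x0 I)
  - eta * Q3 F lam x0 I [::].
Proof.
rewrite [LHS](@tuple_avg_foldl _ _ _ _ _ (fun y => dot (err F lam x0 I) (y - x0))).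
rewrite (@tuple_avg_eq _ _ _ _ _ (fun s => Q1 F lam eta x0 I s
           + (- (eta * (1 - lam))) * Q2 F lam eta x0 I s + (- (eta * Q3 F lam x0 I [::])))).
  by rewrite tuple_avg_affine ?card_batches_neq0 // !mulNr.
by move=> s; rewrite svrg_step_drift // !mulNr.
Qed.

(* Per outer batch I: b E<e, x_N - x0> = -eta (1-lam) B E<e, grad f(x_N)> - eta B |e|^2,
   the geometric law of N turning the one-step recursion into this balance. *)
Lemma epoch_identity_batch (I : {set 'I_n}) :
  geom_integrable B b (Q1 F lam eta x0 I) -> geom_integrable B b (Q2 F lam eta x0 I) ->
  b%:R * geomE B b (Q1 F lam eta x0 I) =
  - (eta * (1 - lam) * B%:R) * geomE B b (Q2 F lam eta x0 I)
  - eta * B%:R * geomE B b (Q3 F lam x0 I).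
Proof.
move=> int1 int2.
set gm := gam R B b.
set u := geom_term B b (Q1 F lam eta x0 I).
set v := geom_term B b (Q2 F lam eta x0 I).
set z := geom_term B b (Q3 F lam x0 I).
have z_geometric : z = geometric ((1 - gm) * Q3 F lam x0 I [::]) gm.
  apply: funext => N; rewrite /z geom_term_avg tuple_avg_const ?card_batches_neq0 //.
  by rewrite /= mulrAC.
have gm_lt1 : `|gm| < 1.
  by rewrite ger0_norm ?gam_ge0 ?gam_lt1 //; case/andP: b_range.
have cu : cvgn (series u) by exact: geom_series_cvg.
have cv : cvgn (series v) by exact: geom_series_cvg.
have cz : cvgn (series z) by rewrite z_geometric; exact: is_cvg_geometric_series.
set w := (- (eta * (1 - lam))) *: v + (- eta) *: z.
have cw : cvgn (series w).
  by apply: is_cvg_seriesD; [exact: is_cvg_seriesZ cv | exact: is_cvg_seriesZ cz].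
have lim_w : limn (series w) =
    - (eta * (1 - lam)) * limn (series v) + (- eta) * limn (series z).
  rewrite lim_seriesD; [|exact: is_cvg_seriesZ cv | exact: is_cvg_seriesZ cz].
  by rewrite !lim_seriesZ.
have u0 : u 0%N = 0.
  by rewrite /u geom_term_avg tuple_avg0 /Q1 /traj /= subrr dot0 mulr0.
have u_rec N : u N.+1 = gm * (u N + w N).
  rewrite /u /w /v /z !fctE !geom_term_avg Q1_step /Q3 tuple_avg_const ?card_batches_neq0 //.
  have scale_mul (a x : R) : a *: x = a * x by [].
  by rewrite !scale_mul /gm exprS; ring.
have sum_nz : (B%:R + b%:R : R) != 0.
  by rewrite -natrD pnatr_eq0 addn_eq0 negb_and -lt0n B_pos.
have fixed := series_fixed_point u0 u_rec cu cw.
rewrite /gm /gam natrD in fixed.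
by rewrite /geomE -/u -/v -/z (geometric_balance sum_nz fixed) lim_w; ring.
Qed.

Lemma epoch_identity :
  epoch_integrable B b (Q1 F lam eta x0) -> epoch_integrable B b (Q2 F lam eta x0) ->
  b%:R * epochE B b (Q1 F lam eta x0) =
  - (eta * (1 - lam) * B%:R) * epochE B b (Q2 F lam eta x0)
  - eta * B%:R * epochE B b (Q3 F lam x0).
Proof.
move=> int1 int2; rewrite /epochE !mulr_sumr -sumrB; apply: eq_bigr => I I_in.
by rewrite mulrCA epoch_identity_batch; [ring | exact: int1 | exact: int2].
Qed.

End EpochIdentity.

Lemma Rintegral_lincomb (dsp : measure_display) (T : measurableType dsp) (R : realType)
    (mu : measure T R) (D : set T) (f g : T -> R) (a c : R) :
  measurable D -> mu.-integrable D (EFin \o f) -> mu.-integrable D (EFin \o g) ->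
  Rintegral mu D (fun x => a * f x + c * g x) = a * Rintegral mu D f + c * Rintegral mu D g.
Proof.
move=> mD f_int g_int.
have scaled_int (h : T -> R) (k : R) : mu.-integrable D (EFin \o h) ->
    mu.-integrable D (EFin \o (fun x => k * h x)).
  move=> h_int; rewrite (_ : _ \o _ = fun x => (k%:E * (h x)%:E)%E).
    exact: integrableZl.
  by apply: funext => x; rewrite /= EFinM.
by rewrite RintegralD ?scaled_int // !RintegralZl.
Qed.

Theorem lemmaB10 (R : realType) (dsp : measure_display) (Omega : measurableType dsp)
  (P : probability Omega R) (n d : nat) (F : 'I_n -> 'rV[R]_d -> R) (L : R)
  (X : Omega -> 'rV[R]_d) (B b : nat) (eta lam : R) :
  (0 < n)%N ->
  (forall i, Lsmooth L (F i)) ->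
  (0 < B <= n)%N -> (0 < b <= n)%N ->
  0 < lam < 1 ->
  (forall w, epoch_integrable B b (Q1 F lam eta (X w))) ->
  (forall w, epoch_integrable B b (Q2 F lam eta (X w))) ->
  P.-integrable setT (fun w => (epochE B b (Q1 F lam eta (X w)))%:E) ->
  P.-integrable setT (fun w => (epochE B b (Q2 F lam eta (X w)))%:E) ->
  P.-integrable setT (fun w => (epochE B b (Q3 F lam (X w)))%:E) ->
  b%:R * fullE P B b (Q1 F lam eta) X
  = - (eta * (1 - lam) * B%:R) * fullE P B b (Q2 F lam eta) X
    - eta * B%:R * fullE P B b (Q3 F lam) X.
Proof.
move=> _ _ /andP[B_pos _] b_range _ int1 int2 intE1 intE2 intE3.
rewrite /fullE -RintegralZl //.
rewrite (@eq_Rintegral _ _ _ P setT (fun w =>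
    - (eta * (1 - lam) * B%:R) * epochE B b (Q2 F lam eta (X w))
    + (- (eta * B%:R)) * epochE B b (Q3 F lam (X w)))); last first.
  by move=> w _; rewrite epoch_identity ?int1 ?int2 //; ring.
by rewrite Rintegral_lincomb //; ring.
Qed.
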